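(* In the semi-classical setting, for every $n\ge1$ the polynomial $y=p_n$ satisfies $$W\Theta_n\, y'' = \big(W\Theta_n' - W'\Theta_n - 2V\Theta_n\big)\,y' + K_n\, y,$$ where $$K_n = (\Omega_n - V)'\Theta_n - (\Omega_n-V)\Theta_n' + \frac{\Theta_n\big(\Omega_n^2 - V^2 - a_n^2\Theta_n\Theta_{n-1}\big)}{W},$$ and $K_n$ is a polynomial.
   Context: Let $(\mu_k)_{k\ge 0}$ be complex numbers such that all Hankel determinants $\det(\mu_{i+j})_{0\le i,j\le n}$ are nonzero; $\mathcal L(x^k)=\mu_k$; $p_n(z)=\gamma_n z^n+\cdots$ ($\gamma_n\ne0$) orthonormal: $\mathcal L(p_np_m)=\delta_{n,m}$; recurrence $a_{n+1}p_{n+1}(z)=(z-b_n)p_n(z)-a_np_{n-1}(z)$, $p_{-1}=0$, $a_n=\gamma_{n-1}/\gamma_n$. $f(z)=\sum_{k\ge0}\mu_k z^{-k-1}$ (formal series); $p^{(1)}_{n-1}$ is the polynomial part of $fp_n$ and $\varepsilon_n=fp_n-p^{(1)}_{n-1}$. Semi-classical: polynomials $W\not\equiv0,V,U$ with $Wf'=2Vf+U$. For $n\ge0$, $\Theta_n = W(\varepsilon_n p_n' - \varepsilon_n' p_n) + 2V\varepsilon_n p_n$, and for $n\ge1$, $\Omega_n = a_n W(\varepsilon_{n-1}p_n' - \varepsilon_n' p_{n-1}) + a_n V(\varepsilon_{n-1}p_n + \varepsilon_n p_{n-1})$; these are polynomials in $z$. Primes denote $d/dz$. *)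

From HB Require Import structures.
From mathcomp Require Import all_boot all_order all_algebra.
From mathcomp Require Import complex.
From mathcomp Require Import reals.
Set Implicit Arguments. Unset Strict Implicit. Unset Printing Implicit Defensive.
Import Order.TTheory GRing.Theory Num.Theory.
Local Open Scope ring_scope.

(* Formal Laurent series in z with finitely many positive powers.
   A pair (d, c) represents  z^d * sum_{k>=0} c k * z^(-k),
   i.e. the coefficient of z^m is c (d - m) for m <= d, and 0 for m > d. *)
Section Laurent.
Variable C : comNzRingType.

Definition LS := (nat * (nat -> C))%type.

Definition ls_coef (x : LS) (m : int) : C :=
  if (m <= (x.1)%:Z)%R then x.2 (absz ((x.1)%:Z - m)) else 0.

Definition ls_eq (x y : LS) : Prop := forall m : int, ls_coef x m = ls_coef y m.

Definition ls_of_poly (q : {poly C}) : LS :=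
  (size q, fun k => if (k <= size q)%N then q`_(size q - k) else 0).

Definition ls_add (x y : LS) : LS :=
  let D := maxn x.1 y.1 in
  (D, fun k => ls_coef x (D%:Z - k%:Z) + ls_coef y (D%:Z - k%:Z)).

Definition ls_opp (x : LS) : LS := (x.1, fun k => - x.2 k).

Definition ls_sub (x y : LS) : LS := ls_add x (ls_opp y).

Definition ls_mul (x y : LS) : LS :=
  ((x.1 + y.1)%N, fun k => \sum_(i < k.+1) x.2 i * y.2 (k - i)%N).

(* formal derivative d/dz: c_j z^(d-j) |-> (d-j) c_j z^(d-j-1) *)
Definition ls_deriv (x : LS) : LS :=
  (x.1, fun k => if k is k'.+1 then x.2 k' * ((x.1)%:Z - k'%:Z)%:~R else 0).

Definition polypart (x : LS) : {poly C} := \poly_(i < (x.1).+1) ls_coef x i%:Z.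

End Laurent.

Section OP.
Variable C : fieldType.
Implicit Types (mu : nat -> C) (p : nat -> {poly C}).

Definition Lfun mu (q : {poly C}) : C := \sum_(i < size q) q`_i * mu i.

Definition hankel mu (n : nat) : 'M[C]_(n.+1) := \matrix_(i, j) mu (i + j)%N.

Definition OP_orthonormal mu p : Prop :=
  (forall n, size (p n) = n.+1) /\
  (forall n m, Lfun mu (p n * p m) = (n == m)%:R).

Definition gam p (n : nat) : C := lead_coef (p n).

(* a_n = gamma_{n-1} / gamma_n  (used for n >= 1) *)
Definition acoef p (n : nat) : C := gam p n.-1 / gam p n.

(* f(z) = sum_{k>=0} mu_k z^{-k-1} *)
Definition fseries mu : LS C := (0%N, fun k => if k is k'.+1 then mu k' else 0).

(* eps_n = f p_n - p^{(1)}_{n-1}, with p^{(1)}_{n-1} the polynomial part of f p_n *)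
Definition eps mu p (n : nat) : LS C :=
  let g := ls_mul (fseries mu) (ls_of_poly (p n)) in
  ls_sub g (ls_of_poly (polypart g)).

Definition semiclassical mu (W V U : {poly C}) : Prop :=
  W != 0 /\
  ls_eq (ls_mul (ls_of_poly W) (ls_deriv (fseries mu)))
        (ls_add (ls_mul (ls_of_poly (2%:R * V)) (fseries mu)) (ls_of_poly U)).

Definition Theta_ls mu p (W V : {poly C}) (n : nat) : LS C :=
  let e := eps mu p n in
  let P := ls_of_poly (p n) in
  let P' := ls_of_poly (p n)^`() in
  ls_add (ls_mul (ls_of_poly W) (ls_sub (ls_mul e P') (ls_mul (ls_deriv e) P)))
         (ls_mul (ls_of_poly (2%:R * V)) (ls_mul e P)).

Definition Omega_ls mu p (W V : {poly C}) (n : nat) : LS C :=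
  let e := eps mu p n in
  let e1 := eps mu p n.-1 in
  let an := acoef p n in
  ls_add
    (ls_mul (ls_of_poly (an *: W))
       (ls_sub (ls_mul e1 (ls_of_poly (p n)^`()))
               (ls_mul (ls_deriv e) (ls_of_poly (p n.-1)))))
    (ls_mul (ls_of_poly (an *: V))
       (ls_add (ls_mul e1 (ls_of_poly (p n)))
               (ls_mul e (ls_of_poly (p n.-1))))).

(* Theta_n and Omega_n are polynomials; we take them as elements of {poly C} *)
Definition Theta mu p W V n : {poly C} := polypart (Theta_ls mu p W V n).
Definition Omega mu p W V n : {poly C} := polypart (Omega_ls mu p W V n).

End OP.

From HB Require Import structures.
From mathcomp Require Import all_boot all_order all_algebra.
From mathcomp Require Import complex reals.
From mathcomp Require Import zify ring.
Set Implicit Arguments. Unset Strict Implicit. Unset Printing Implicit Defensive.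
Import Order.TTheory GRing.Theory Num.Theory.
Local Open Scope ring_scope.

(* Let [q_n] be the polynomial part of [f p_n], so [eps_n = f p_n - q_n].  Substituting
   [W f' = 2 V f + U] into the definitions gives
   [Theta_n = W (q_n' p_n - q_n p_n') - U p_n^2 - 2 V q_n p_n] and a similar polynomial
   formula for [Omega_n]; these Laurent-series identities become polynomial identities
   once [x(z)] is replaced by the first [N] coefficients of [t^D x(1/t)], for all [N].
   Orthonormality gives the Casorati identity [a_n (q_n p_(n-1) - q_(n-1) p_n) = 1], read
   off from the leading term of [eps_(n-1) p_n - eps_n p_(n-1)].  It yields the structure
   relations [W p_n' = (Omega_n - V) p_n - a_n Theta_n p_(n-1)] and
   [W p_(n-1)' = a_n Theta_(n-1) p_n - (Omega_n + V) p_(n-1)], and shows that [W] divides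
   [Omega_n^2 - V^2 - a_n^2 Theta_n Theta_(n-1)]; eliminating [p_(n-1)] between the first
   relation, its derivative and the second one gives the differential equation. *)

Section PolynomialComplements.
Variable C : comNzRingType.
Implicit Types p q : {poly C}.

Lemma take_polyMtake N p q :
  take_poly N (take_poly N p * take_poly N q) = take_poly N (p * q).
Proof.
apply/polyP => k; rewrite !coef_take_poly; case: ifP => // kN.
rewrite !coefM; apply: eq_bigr => i _.
by rewrite !coef_take_poly !ifT //; move: (ltn_ord i); lia.
Qed.

Lemma take_poly_idem N p : take_poly N (take_poly N p) = take_poly N p.
Proof. exact/take_poly_id/size_take_poly. Qed.

Lemma take_polyMr N p q : take_poly N (p * take_poly N q) = take_poly N (p * q).
Proof. by rewrite -take_polyMtake take_poly_idem take_polyMtake. Qed.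

Lemma coefM_shift p q s t :
    (forall i, (i < s)%N -> p`_i = 0) -> (forall j, (j < t)%N -> q`_j = 0) ->
  (forall k, (k < s + t)%N -> (p * q)`_k = 0) /\ (p * q)`_(s + t) = p`_s * q`_t.
Proof.
have shiftE (u : {poly C}) n : (forall i, (i < n)%N -> u`_i = 0) -> u = drop_poly n u * 'X^n.
  move=> u0; rewrite -{1}(poly_take_drop n u).
  suff -> : take_poly n u = 0 by rewrite add0r.
  by apply/polyP => i; rewrite coef_take_poly coef0; case: ifP => // /u0.
move=> hp hq.
have -> : p * q = drop_poly s p * drop_poly t q * 'X^(s + t).
  by rewrite {1}(shiftE _ _ hp) {1}(shiftE _ _ hq) mulrACA -exprD.
split=> [k kst|]; first by rewrite coefMXn kst.
by rewrite coefMXn ltnn subnn coef0M !coef_drop_poly !add0n.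
Qed.

Lemma size_polyM_leqS p q m n : (size p <= m.+1)%N -> (size q <= n.+1)%N ->
  (size (p * q)%R <= (m + n).+1)%N.
Proof. by move=> hp hq; apply: leq_trans (size_polyMleq _ _) _; lia. Qed.

Lemma size_polyD_leq p q n : (size p <= n)%N -> (size q <= n)%N -> (size (p + q)%R <= n)%N.
Proof. by move=> hp hq; apply: leq_trans (size_polyD _ _) _; rewrite geq_max hp. Qed.

Lemma size_polyB_leq p q n : (size p <= n)%N -> (size q <= n)%N -> (size (p - q)%R <= n)%N.
Proof. by move=> hp hq; apply: size_polyD_leq; rewrite ?size_polyN. Qed.

Lemma take_poly_eq_mod N (a b k E1 E2 : {poly C}) :
  take_poly N a = take_poly N b -> E1 = E2 + k * (a - b) -> take_poly N E1 = take_poly N E2.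
Proof.
by move=> ab ->; rewrite take_polyD -take_polyMr raddfB /= ab subrr mulr0 take_poly0r addr0.
Qed.

Lemma size_mulnatl_leq n p : (size (n%:R * p)%R <= size p)%N.
Proof. by rewrite -polyC_natr mul_polyC size_scale_leq. Qed.

Lemma size_deriv_leq p : (size p^`() <= size p)%N.
Proof.
by apply/leq_sizeP => i hi; rewrite coef_deriv nth_default ?mul0rn // (leq_trans hi).
Qed.

End PolynomialComplements.

Section Reversal.
Variable C : comNzRingType.
Implicit Types p q : {poly C}.

Definition poly_rev D p : {poly C} := \poly_(k < D.+1) p`_(D - k).

Lemma poly_revD D : {morph poly_rev D : p q / p + q}.
Proof.
by move=> p q; apply/polyP => k; rewrite coefD !coef_poly; case: ifP; rewrite ?coefD ?addr0.
Qed.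

Lemma poly_revZ D c p : poly_rev D (c *: p) = c *: poly_rev D p.
Proof.
by apply/polyP => k; rewrite coefZ !coef_poly; case: ifP; rewrite ?coefZ ?mulr0.
Qed.

HB.instance Definition _ D := GRing.isSemilinear.Build C {poly C} {poly C} _
  (poly_rev D) (poly_revZ D, poly_revD D).

Lemma poly_rev_monomial D c m : (m <= D)%N -> poly_rev D (c *: 'X^m) = c *: 'X^(D - m).
Proof.
move=> mD; apply/polyP => k; rewrite coef_poly !coefZ !coefXn.
case: ifP => kD; first by congr (_ * _%:R); apply/eqP/eqP; lia.
by rewrite (_ : (k == D - m)%N = false) ?mulr0 //; apply/negbTE/eqP; lia.
Qed.

Lemma poly_revM D1 D2 p q : (size p <= D1.+1)%N -> (size q <= D2.+1)%N ->
  poly_rev (D1 + D2) (p * q) = poly_rev D1 p * poly_rev D2 q.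
Proof.
have expand (u : {poly C}) n : (size u <= n.+1)%N -> u = \sum_(i < n.+1) u`_i *: 'X^i.
  by move=> hu; rewrite -{1}(take_poly_id hu) /take_poly poly_def.
have rev_expand (u : {poly C}) n : (size u <= n.+1)%N ->
    poly_rev n u = \sum_(i < n.+1) u`_i *: 'X^(n - i).
  move=> hu; rewrite {1}(expand _ _ hu) linear_sum; apply: eq_bigr => i _.
  by rewrite /= poly_rev_monomial // -ltnS.
move=> hp hq; rewrite (rev_expand _ _ hp) (rev_expand _ _ hq).
rewrite {1}(expand _ _ hp) {1}(expand _ _ hq) !mulr_suml linear_sum.
apply: eq_bigr => i _; rewrite !mulr_sumr linear_sum; apply: eq_bigr => j _.
have := ltn_ord i; have := ltn_ord j => jD iD.
rewrite /= -scalerAl -scalerAr scalerA -exprD poly_rev_monomial; last by lia.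
by rewrite -scalerAl -scalerAr scalerA -exprD; congr (_ *: 'X^_); lia.
Qed.

Lemma poly_rev_double D p : poly_rev D (2%:R * p) = 2%:R * poly_rev D p.
Proof. by rewrite !mulr_natl raddfMn. Qed.

(* Under [z = 1/t], multiplying by [t^D] turns [d/dz] into [t (D - t d/dt)]. *)
Definition rev_deriv D p := 'X * (D%:R * p - 'X * p^`()).

Lemma coef_rev_deriv D p k :
  (rev_deriv D p)`_k = if k is k'.+1 then p`_k' *+ D - p`_k' *+ k' else 0.
Proof.
rewrite /rev_deriv coefXM; case: k => [|k] //=.
rewrite coefB mulr_natl coefMn coefXM; case: k => [|k] /=; first by rewrite subr0.
by rewrite coef_deriv.
Qed.

Lemma rev_derivB D p q : rev_deriv D (p - q) = rev_deriv D p - rev_deriv D q.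
Proof. by rewrite /rev_deriv derivB; ring. Qed.

Lemma rev_derivM D1 D2 p q :
  rev_deriv (D1 + D2) (p * q) = rev_deriv D1 p * q + p * rev_deriv D2 q.
Proof. by rewrite /rev_deriv derivM natrD; ring. Qed.

Lemma poly_rev_deriv D p : (size p <= D.+1)%N ->
  poly_rev D p^`() = rev_deriv D (poly_rev D p).
Proof.
move=> pD; apply/polyP => k; rewrite coef_rev_deriv [LHS]coef_poly.
case: k => [|k]; first by rewrite ltn0Sn subn0 coef_deriv nth_default ?mul0rn.
rewrite [(poly_rev D p)`_k]coef_poly; case: (ltnP k D) => kD.
  rewrite ifT // ifT 1?ltnW // coef_deriv.
  have -> : (D - k.+1).+1 = (D - k)%N by lia.
  by rewrite -mulrnBr ?(ltnW kD) // (subnKC (ltnW kD)).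
rewrite ifF; last by apply/negbTE; rewrite -leqNgt.
case: ifP => [kD1|_]; last by rewrite !mul0rn subrr.
by rewrite (_ : k = D) ?subrr //; lia.
Qed.

Lemma take_poly_rev_deriv N D p :
  take_poly N (rev_deriv D (take_poly N p)) = take_poly N (rev_deriv D p).
Proof.
apply/polyP => k; rewrite !coef_take_poly !coef_rev_deriv.
by case: ifP => // kN; case: k kN => // k kN; rewrite coef_take_poly ifT //; lia.
Qed.

End Reversal.

Section LaurentSeries.
Variable C : comNzRingType.
Implicit Types (x y : LS C) (p : {poly C}).

Lemma ls_coef_gt x m : x.1%:Z < m -> ls_coef x m = 0.
Proof. by rewrite /ls_coef => h; case: ifPn => //; lia. Qed.

Lemma ls_coef_add x y m : ls_coef (ls_add x y) m = ls_coef x m + ls_coef y m.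
Proof.
rewrite {1}/ls_coef /=; have := leq_maxl x.1 y.1; have := leq_maxr x.1 y.1.
set D := maxn _ _ => yD xD; case: ifPn => mD; last by rewrite !ls_coef_gt ?addr0 //; lia.
by rewrite (_ : D%:Z - (absz (D%:Z - m))%:Z = m) //; lia.
Qed.

Lemma ls_coef_opp x m : ls_coef (ls_opp x) m = - ls_coef x m.
Proof. by rewrite /ls_coef /=; case: ifPn; rewrite ?oppr0. Qed.

Lemma ls_coef_sub x y m : ls_coef (ls_sub x y) m = ls_coef x m - ls_coef y m.
Proof. by rewrite ls_coef_add ls_coef_opp. Qed.

Lemma ls_coef_poly p m :
  ls_coef (ls_of_poly p) m = if 0 <= m then p`_(absz m) else 0.
Proof.
rewrite /ls_coef /=; case: ifPn => h1; case: ifPn => h2 //.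
- by rewrite ifT; [congr (p`_ _) | ]; lia.
- by case: ifPn => // h3; rewrite nth_default //; lia.
- by rewrite nth_default //; lia.
Qed.

Lemma ls_coef_poly_ge p m : (size p)%:Z <= m -> ls_coef (ls_of_poly p) m = 0.
Proof.
move=> pm; rewrite ls_coef_poly; case: ifP => // _; rewrite nth_default //.
by move: pm; set s := size _; lia.
Qed.

Lemma ls_coef_deriv x m : ls_coef (ls_deriv x) m = ls_coef x (m + 1) * (m + 1)%:~R.
Proof.
case: x => d c; rewrite /ls_coef /=; case: ifPn => md; last first.
  by rewrite ifF ?mul0r //; apply/negbTE; lia.
case E: (absz (d%:Z - m)) => [|k].
  by rewrite ifF ?mul0r //; apply/negbTE; lia.
rewrite ifT; last by lia.
by congr (_ * _); [congr (c _) | congr (_%:~R)]; lia.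
Qed.

Lemma polypart_eq x p : ls_eq x (ls_of_poly p) -> polypart x = p.
Proof.
move=> xp; apply/polyP => i; rewrite coef_poly.
have := xp i%:Z; rewrite ls_coef_poly /= => <-.
by case: ifP => // iD; rewrite ls_coef_gt //; lia.
Qed.

(* The first [N] coefficients of the power series [t^D x(1/t)], for [x.1 <= D]. *)
Definition ls_trunc D N x : {poly C} := \poly_(k < N) ls_coef x (D%:Z - k%:Z).

Lemma coef_ls_trunc D N x k :
  (ls_trunc D N x)`_k = if (k < N)%N then ls_coef x (D%:Z - k%:Z) else 0.
Proof. exact: coef_poly. Qed.

Lemma ls_trunc_add D N x y :
  ls_trunc D N (ls_add x y) = ls_trunc D N x + ls_trunc D N y.
Proof.
apply/polyP => k; rewrite coefD !coef_ls_trunc ls_coef_add.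
by case: ifP; rewrite ?addr0.
Qed.

Lemma ls_trunc_opp D N x : ls_trunc D N (ls_opp x) = - ls_trunc D N x.
Proof.
apply/polyP => k; rewrite coefN !coef_ls_trunc ls_coef_opp.
by case: ifP; rewrite ?oppr0.
Qed.

Lemma ls_trunc_shift D N x : (x.1 <= D)%N ->
  ls_trunc D N x = take_poly N ('X^(D - x.1) * \poly_(i < N) x.2 i).
Proof.
case: x => d c /= dD; apply/polyP => k; rewrite coef_ls_trunc coef_take_poly.
case: ifP => // kN; rewrite coefXnM coef_poly /ls_coef /=.
case: ifP => h1; case: ifP => h2 //; try lia.
by rewrite ifT; [congr (c _) | ]; lia.
Qed.

Lemma ls_trunc_mul D1 D2 N x y : (x.1 <= D1)%N -> (y.1 <= D2)%N ->
  ls_trunc (D1 + D2) N (ls_mul x y) = take_poly N (ls_trunc D1 N x * ls_trunc D2 N y).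
Proof.
move=> xD yD; rewrite (ls_trunc_shift N xD) (ls_trunc_shift N yD) take_polyMtake.
rewrite ls_trunc_shift /=; last by rewrite leq_add.
set P := \poly_(i < N) x.2 i; set Q := \poly_(i < N) y.2 i.
have -> : \poly_(k < N) \sum_(i < k.+1) x.2 i * y.2 (k - i)%N = take_poly N (P * Q).
  apply/polyP => k; rewrite coef_poly coef_take_poly coefM; case: ifP => // kN.
  by apply: eq_bigr => i _; rewrite !coef_poly !ifT //; move: (ltn_ord i); lia.
rewrite take_polyMr; congr take_poly.
by rewrite (_ : (D1 + D2 - _ = (D1 - x.1) + (D2 - y.1))%N) ?exprD; [ring | lia].
Qed.

Lemma ls_trunc_deriv D N x : (x.1 <= D)%N ->
  ls_trunc D N (ls_deriv x) = take_poly N (rev_deriv D (ls_trunc D N x)).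
Proof.
move=> xD; apply/polyP => k; rewrite coef_ls_trunc coef_take_poly.
case: ifP => // kN; rewrite coef_rev_deriv ls_coef_deriv.
case: k kN => [|k] kN; first by rewrite ls_coef_gt ?mul0r //; lia.
rewrite coef_ls_trunc ifT; last by lia.
rewrite (_ : D%:Z - k.+1%:Z + 1 = D%:Z - k%:Z); last by lia.
by rewrite mulrzr mulrzBr.
Qed.

Lemma ls_trunc_poly D N p : ls_trunc D N (ls_of_poly p) = take_poly N (poly_rev D p).
Proof.
apply/polyP => k; rewrite coef_ls_trunc coef_take_poly coef_poly ls_coef_poly.
by case: ifP => // kN; case: ifPn => h1; case: ifPn => h2 //; [congr (p`_ _) | | ]; lia.
Qed.

Lemma ls_trunc_eq D N x y : ls_eq x y -> ls_trunc D N x = ls_trunc D N y.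
Proof. by move=> xy; apply/polyP => k; rewrite !coef_ls_trunc xy. Qed.

Definition ls_rep D N x (P : {poly C}) :=
  (x.1 <= D)%N /\ ls_trunc D N x = take_poly N P.

Lemma ls_rep_trunc D N x : (x.1 <= D)%N -> ls_rep D N x (ls_trunc D N x).
Proof. by move=> xD; split; rewrite // take_poly_id // size_poly. Qed.

Lemma ls_rep_poly D N p : (size p <= D)%N -> ls_rep D N (ls_of_poly p) (poly_rev D p).
Proof. by move=> pD; split; last exact: ls_trunc_poly. Qed.

Lemma ls_rep_add D N x y P Q :
  ls_rep D N x P -> ls_rep D N y Q -> ls_rep D N (ls_add x y) (P + Q).
Proof.
move=> [xD xP] [yD yQ]; split; first by rewrite geq_max xD.
by rewrite ls_trunc_add xP yQ take_polyD.
Qed.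

Lemma ls_rep_sub D N x y P Q :
  ls_rep D N x P -> ls_rep D N y Q -> ls_rep D N (ls_sub x y) (P - Q).
Proof.
move=> xP [yD yQ]; apply: ls_rep_add xP _; split => //.
by rewrite ls_trunc_opp yQ -linearN.
Qed.

Lemma ls_rep_mul D1 D2 N x y P Q :
  ls_rep D1 N x P -> ls_rep D2 N y Q -> ls_rep (D1 + D2) N (ls_mul x y) (P * Q).
Proof.
move=> [xD xP] [yD yQ]; split; first exact: leq_add.
by rewrite ls_trunc_mul // xP yQ take_polyMtake.
Qed.

Lemma ls_rep_deriv D N x P : ls_rep D N x P -> ls_rep D N (ls_deriv x) (rev_deriv D P).
Proof.
by move=> [xD xP]; split=> //; rewrite ls_trunc_deriv // xP take_poly_rev_deriv.
Qed.

Lemma ls_rep_take D N x P Q :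
  ls_rep D N x P -> take_poly N P = take_poly N Q -> ls_rep D N x Q.
Proof. by move=> [xD xP] PQ; split; rewrite // xP. Qed.

Lemma ls_rep_unique D N x P Q :
  ls_rep D N x P -> ls_rep D N x Q -> take_poly N P = take_poly N Q.
Proof. by move=> [_ <-] [_ <-]. Qed.

Lemma ls_rep_eq D N x y P : ls_eq x y -> (y.1 <= D)%N -> ls_rep D N x P -> ls_rep D N y P.
Proof. by move=> xy yD [_ xP]; split; rewrite // -(ls_trunc_eq D N xy). Qed.

Lemma ls_eq_rep D x y :
  (forall N, exists P, ls_rep D N x P /\ ls_rep D N y P) -> ls_eq x y.
Proof.
move=> rep m; have [_ [[xD _] [yD _]]] := rep 0%N.
case: (boolP (m <= D%:Z)) => mD; last by rewrite !ls_coef_gt //; lia.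
have [P [[_ xP] [_ yP]]] := rep (absz (D%:Z - m)).+1.
rewrite -yP in xP; have := congr1 (fun P : {poly C} => P`_(absz (D%:Z - m))) xP.
by rewrite !coef_ls_trunc ltnSn (_ : D%:Z - (absz (D%:Z - m))%:Z = m) //; lia.
Qed.

Lemma ls_coef_mul_top x y (a b : int) :
    (forall m, a < m -> ls_coef x m = 0) -> (forall m, b < m -> ls_coef y m = 0) ->
  (forall m, a + b < m -> ls_coef (ls_mul x y) m = 0) /\
  ls_coef (ls_mul x y) (a + b) = ls_coef x a * ls_coef y b.
Proof.
move=> xa yb; set D1 := (x.1 + `|a|)%N; set D2 := (y.1 + `|b|)%N.
set s := `|D1%:Z - a|%N; set t := `|D2%:Z - b|%N; set N := (s + t).+1.
set P := ls_trunc D1 N x; set Q := ls_trunc D2 N y.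
have xyE k : (k < N)%N -> ls_coef (ls_mul x y) ((D1 + D2)%N%:Z - k%:Z) = (P * Q)`_k.
  move=> kN; have := ls_trunc_mul N (leq_addr `|a| x.1) (leq_addr `|b| y.1).
  move=> /(congr1 (fun R : {poly C} => R`_k)).
  by rewrite coef_ls_trunc coef_take_poly kN.
have Plow i : (i < s)%N -> P`_i = 0.
  by move=> iS; rewrite coef_ls_trunc; case: ifP => // _; apply: xa; lia.
have Qlow j : (j < t)%N -> Q`_j = 0.
  by move=> jt; rewrite coef_ls_trunc; case: ifP => // _; apply: yb; lia.
have [PQlow PQtop] := coefM_shift Plow Qlow.
split=> [m abm|].
  have [Dm|mD] := ltnP (D1 + D2)%N `|m|%N.
    by rewrite ls_coef_gt //= ; lia.
  rewrite (_ : m = (D1 + D2)%N%:Z - `|(D1 + D2)%N%:Z - m|%N%:Z); last by lia.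
  by rewrite xyE ?PQlow //; lia.
rewrite (_ : a + b = (D1 + D2)%N%:Z - (s + t)%N%:Z); last by lia.
rewrite xyE // PQtop !coef_ls_trunc !ifT; try lia.
by congr (ls_coef _ _ * ls_coef _ _); lia.
Qed.

End LaurentSeries.

Section MomentFunctional.
Variables (C : fieldType) (mu : nat -> C).
Implicit Types q s : {poly C}.

Lemma LfunE q M : (size q <= M)%N -> Lfun mu q = \sum_(i < M) q`_i * mu i.
Proof.
move=> qM; rewrite /Lfun (big_ord_widen M (fun i => q`_i * mu i) qM) big_mkcond /=.
by apply: eq_bigr => i _; case: ifP => // iq; rewrite nth_default ?mul0r // leqNgt iq.
Qed.

Lemma LfunD q s : Lfun mu (q + s) = Lfun mu q + Lfun mu s.
Proof.
pose M := maxn (size q) (size s).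
rewrite !(@LfunE _ M) ?leq_maxl ?leq_maxr ?size_polyD // -big_split /=.
by apply: eq_bigr => i _; rewrite coefD mulrDl.
Qed.

Lemma LfunZ c q : Lfun mu (c *: q) = c * Lfun mu q.
Proof.
rewrite !(@LfunE _ (size q)) ?size_scale_leq // mulr_sumr.
by apply: eq_bigr => i _; rewrite coefZ mulrA.
Qed.

Lemma Lfun0 : Lfun mu 0 = 0.
Proof. by rewrite /Lfun size_poly0 big_ord0. Qed.

Variable p : nat -> {poly C}.
Hypothesis p_on : OP_orthonormal mu p.

Lemma size_OP j : size (p j) = j.+1.
Proof. exact: p_on.1. Qed.

Lemma gam_neq0 j : gam p j != 0.
Proof. by rewrite lead_coef_eq0 -size_poly_eq0 size_OP. Qed.

Lemma coef_OP_top j : (p j)`_j = gam p j.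
Proof. by rewrite /gam lead_coefE size_OP. Qed.

Lemma size_OP_reduce m s : (size s <= m.+1)%N ->
  (size (s - (s`_m / gam p m) *: p m)%R <= m)%N.
Proof.
move=> sm; apply/leq_sizeP => i mi; rewrite coefB coefZ.
have [mi'|im] := ltnP m i.
  have si : s`_i = 0 by rewrite nth_default //; apply: leq_trans sm mi'.
  by rewrite si [(p m)`_i]nth_default ?size_OP // mulr0 subr0.
have -> : i = m by apply/eqP; rewrite eqn_leq im mi.
by rewrite coef_OP_top divfK ?gam_neq0 // subrr.
Qed.

Lemma Lfun_mul_OP j s : (size s <= j)%N -> Lfun mu (s * p j) = 0.
Proof.
suff Hm m : forall s, (size s <= m)%N -> (m <= j)%N -> Lfun mu (s * p j) = 0.
  by move=> sj; apply: Hm sj _.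
elim: m => [|m IH] {}s sm mj.
  by move: sm; rewrite leqn0 size_poly_eq0 => /eqP ->; rewrite mul0r Lfun0.
rewrite -(subrK ((s`_m / gam p m) *: p m) s) mulrDl LfunD.
rewrite IH ?size_OP_reduce ?(ltnW mj) // -scalerAl LfunZ p_on.2.
by rewrite (ltn_eqF mj) mulr0 addr0.
Qed.

Lemma Lfun_Xn_mul_OP j : Lfun mu ('X^j * p j) = (gam p j)^-1.
Proof.
rewrite -(subrK ((('X^j)`_j / gam p j) *: p j) 'X^j) mulrDl LfunD.
rewrite Lfun_mul_OP ?size_OP_reduce ?size_polyXn // -scalerAl LfunZ p_on.2.
by rewrite eqxx mulr1 coefXn eqxx mul1r add0r.
Qed.

End MomentFunctional.

Definition assoc_poly (C : fieldType) (mu : nat -> C) (p : nat -> {poly C}) j :=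
  polypart (ls_mul (fseries mu) (ls_of_poly (p j))).

Section Remainder.
Variables (C : fieldType) (mu : nat -> C) (p : nat -> {poly C}).

Lemma ls_coef_eps_ge0 j m : 0 <= m -> ls_coef (eps mu p j) m = 0.
Proof.
move=> m0; rewrite ls_coef_sub ls_coef_poly m0 coef_poly.
set g := ls_mul _ _; rewrite (_ : m = `|m|%N%:Z); last by lia.
by case: ifPn => mg; rewrite ?subrr // ls_coef_gt ?subrr //; lia.
Qed.

Lemma ls_coef_eps_lt0 j t : ls_coef (eps mu p j) (- t.+1%:Z) = Lfun mu ('X^t * p j).
Proof.
rewrite ls_coef_sub ls_coef_poly (_ : 0 <= - t.+1%:Z = false); last by lia.
rewrite subr0 /ls_coef /= add0n addnS big_ord_recl /= mul0r add0r.
rewrite (@LfunE _ _ _ (size (p j) + t).+1); last first.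
  by apply: leq_trans (size_polyMleq _ _) _; rewrite size_polyXn; lia.
apply: eq_bigr => -[i iS] _; rewrite coefXnM /bump /= add1n mulrC.
move: iS; set n := size (p j) => iS; case: (ltnP i t) => it.
  by rewrite ifF ?mul0r //; apply/negbTE; lia.
by rewrite ifT; [congr (_`_ _ * mu _) | ]; lia.
Qed.

Lemma ls_rep_eps D N j :
    (size (p j) <= D)%N -> (size (assoc_poly mu p j) <= D)%N ->
  ls_rep D N (eps mu p j)
    (ls_trunc 0 N (fseries mu) * poly_rev D (p j) - poly_rev D (assoc_poly mu p j)).
Proof.
move=> pD qD; apply: ls_rep_sub (ls_rep_poly N qD).
by have := ls_rep_mul (ls_rep_trunc (x := fseries mu) N (leqnn 0)) (ls_rep_poly N pD).
Qed.

Lemma casorati_eps n :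
  let A := p n in let B := p n.-1 in
  let q := assoc_poly mu p n in let r := assoc_poly mu p n.-1 in
  ls_eq (ls_of_poly (q * B - r * A))
    (ls_sub (ls_mul (eps mu p n.-1) (ls_of_poly A)) (ls_mul (eps mu p n) (ls_of_poly B))).
Proof.
move=> A B q r; set P := q * B - r * A.
pose D := (size A + size q + size B + size r + size P)%N.
have [AD qD BD rD] : [/\ size A <= D, size q <= D, size B <= D & size r <= D]%N.
  by rewrite /D; split; lia.
apply: (@ls_eq_rep _ (D + D)) => N; exists (poly_rev (D + D) P); split.
  by apply: ls_rep_poly; rewrite /D; lia.
apply: ls_rep_take (ls_rep_sub (ls_rep_mul (ls_rep_eps N BD rD) (ls_rep_poly N AD))
                               (ls_rep_mul (ls_rep_eps N AD qD) (ls_rep_poly N BD))) _.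
by rewrite /P (raddfB (poly_rev (D + D))) /= !poly_revM ?leqW //; congr take_poly; ring.
Qed.

Hypothesis p_on : OP_orthonormal mu p.

Lemma ls_coef_eps_gt j m : - j%:Z <= m -> ls_coef (eps mu p j) m = 0.
Proof.
move=> jm; have [m0|m0] := boolP (0 <= m); first exact: ls_coef_eps_ge0.
rewrite (_ : m = - (`|m|%N.-1).+1%:Z); last by lia.
by rewrite ls_coef_eps_lt0 Lfun_mul_OP // size_polyXn; lia.
Qed.

Lemma ls_coef_eps_top j : ls_coef (eps mu p j) (- j.+1%:Z) = (gam p j)^-1.
Proof. by rewrite ls_coef_eps_lt0 Lfun_Xn_mul_OP. Qed.

Lemma casorati_OP n : (1 <= n)%N ->
  (acoef p n)%:P * (assoc_poly mu p n * p n.-1 - assoc_poly mu p n.-1 * p n) = 1.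
Proof.
move=> n1; set A := p n; set B := p n.-1; set q := assoc_poly mu p n.
set r := assoc_poly mu p n.-1; set P := q * B - r * A.
have eP := casorati_eps n.
have e1_gt m : - n%:Z < m -> ls_coef (eps mu p n.-1) m = 0.
  by move=> nm; apply: ls_coef_eps_gt; lia.
have e_gt m : - n.+1%:Z < m -> ls_coef (eps mu p n) m = 0.
  by move=> nm; apply: ls_coef_eps_gt; lia.
have A_gt m : n%:Z < m -> ls_coef (ls_of_poly A) m = 0.
  by move=> nm; apply: ls_coef_poly_ge; rewrite (size_OP p_on); lia.
have B_gt m : n.-1%:Z < m -> ls_coef (ls_of_poly B) m = 0.
  by move=> nm; apply: ls_coef_poly_ge; rewrite (size_OP p_on); lia.
have [e1A_low e1A_top] := ls_coef_mul_top e1_gt A_gt.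
have [eB_low _] := ls_coef_mul_top e_gt B_gt.
(* In degrees [>= 0] only [z^(-n) * z^n] from [eps_(n-1) p_n] contributes. *)
have -> : P = (gam p n / gam p n.-1)%:P.
  apply/polyP => i; rewrite coefC; have := eP i%:Z.
  rewrite ls_coef_poly /= ls_coef_sub (eB_low i%:Z) ?subr0 => [->|]; last by lia.
  case: i => [|i]; last by rewrite e1A_low //; lia.
  rewrite (_ : Posz 0 = - n%:Z + n%:Z) ?e1A_top; last by rewrite addNr.
  rewrite ls_coef_poly le0z_nat /=.
  by rewrite -[n in - n%:Z](prednK n1) ls_coef_eps_top /A (coef_OP_top p_on) mulrC.
rewrite /acoef -polyCM mulrA divfK ?(gam_neq0 p_on) // divff ?(gam_neq0 p_on) //.
Qed.

End Remainder.

Section ReversedFormulas.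
Variables (C : comNzRingType) (D Dw : nat) (W V U A B q r : {poly C}).
Hypotheses (WD : (size W <= Dw)%N) (VD : (size V <= Dw)%N) (UD : (size U <= Dw)%N).
Hypotheses (AD : (size A <= D)%N) (BD : (size B <= D)%N).
Hypotheses (qD : (size q <= D)%N) (rD : (size r <= D)%N).

Let Aq_bounds : [/\ size A <= D.+1, size q <= D.+1, size A^`() <= D.+1
  & size q^`() <= D.+1]%N.
Proof. by split; rewrite ?leqW // (leq_trans (size_deriv_leq _)) ?leqW. Qed.

Let Br_bounds : (size B <= D.+1 /\ size r <= D.+1)%N.
Proof. by split; apply: leqW. Qed.

Let WUV_bounds : [/\ size W <= Dw.+1, size U <= Dw.+1, size V <= Dw.+1
  & size (2%:R * V)%R <= Dw.+1]%N.
Proof. by split; rewrite ?leqW // (leq_trans (size_mulnatl_leq 2 V)) ?leqW. Qed.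

Lemma poly_rev_Theta :
  poly_rev (Dw + (D + D)) (W * (q^`() * A - q * A^`()) - U * A ^+ 2 - 2%:R * V * q * A) =
  poly_rev Dw W * (rev_deriv D (poly_rev D q) * poly_rev D A
                   - poly_rev D q * rev_deriv D (poly_rev D A))
  - poly_rev Dw U * (poly_rev D A * poly_rev D A)
  - 2%:R * poly_rev Dw V * (poly_rev D q * poly_rev D A).
Proof.
have [A1 q1 A'1 q'1] := Aq_bounds.
have [W1 U1 _ V21] := WUV_bounds.
rewrite expr2 -(mulrA _ q) !raddfB /= !(@poly_revM _ Dw (D + D)) //; last 3 first.
- exact: size_polyM_leqS.
- exact: size_polyM_leqS.
- by apply: size_polyB_leq; apply: size_polyM_leqS.
by rewrite !raddfB /= !(@poly_revM _ D D) // !poly_rev_deriv // poly_rev_double.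
Qed.

Lemma poly_rev_Omega c :
  poly_rev (Dw + (D + D))
    (c%:P * (W * (q^`() * B - r * A^`()) - U * (A * B) - V * (r * A + q * B))) =
  c%:P * (poly_rev Dw W * (rev_deriv D (poly_rev D q) * poly_rev D B
                           - poly_rev D r * rev_deriv D (poly_rev D A))
          - poly_rev Dw U * (poly_rev D A * poly_rev D B)
          - poly_rev Dw V * (poly_rev D r * poly_rev D A + poly_rev D q * poly_rev D B)).
Proof.
have [A1 q1 A'1 q'1] := Aq_bounds; have [B1 r1] := Br_bounds.
have [W1 U1 V1 _] := WUV_bounds.
rewrite !mul_polyC linearZ /= !raddfB /= !(@poly_revM _ Dw (D + D)) //; last 3 first.
- by apply: size_polyD_leq; apply: size_polyM_leqS.
- exact: size_polyM_leqS.
- by apply: size_polyB_leq; apply: size_polyM_leqS.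
by rewrite !raddfB raddfD /= !(@poly_revM _ D D) // !poly_rev_deriv.
Qed.

End ReversedFormulas.

Section ThetaOmega.
Variables (C : fieldType) (mu : nat -> C) (p : nat -> {poly C}) (W V U : {poly C}).
Hypothesis semi : semiclassical mu W V U.

Lemma semiclassical_rep N Dw : let F := ls_trunc 0 N (fseries mu) in
    (size W <= Dw)%N -> (size V <= Dw)%N -> (size U <= Dw)%N ->
  take_poly N (poly_rev Dw W * rev_deriv 0 F) =
  take_poly N (2%:R * poly_rev Dw V * F + poly_rev Dw U).
Proof.
move=> F WD VD UD.
have f_rep : ls_rep 0 N (fseries mu) F by exact: ls_rep_trunc.
have V2D := leq_trans (size_mulnatl_leq 2 V) VD.
have := ls_rep_mul (ls_rep_poly N WD) (ls_rep_deriv f_rep); rewrite addn0 => lhs.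
have := ls_rep_mul (ls_rep_poly N V2D) f_rep; rewrite addn0 => /ls_rep_add rhs.
have {}rhs := rhs _ _ (ls_rep_poly N UD).
have := ls_rep_unique (ls_rep_eq semi.2 rhs.1 lhs) rhs.
by rewrite poly_rev_double.
Qed.

Lemma ls_rep_poly_deriv D N (P : {poly C}) : (size P <= D)%N ->
  ls_rep D N (ls_of_poly P^`()) (rev_deriv D (poly_rev D P)).
Proof.
move=> PD; rewrite -poly_rev_deriv ?leqW //.
exact/ls_rep_poly/(leq_trans (size_deriv_leq P)).
Qed.

Lemma Theta_polyE j : let A := p j in let q := assoc_poly mu p j in
  Theta mu p W V j = W * (q^`() * A - q * A^`()) - U * A ^+ 2 - 2%:R * V * q * A.
Proof.
move=> A q; set Th := (X in _ = X); apply: polypart_eq.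
pose D := (size A + size q)%N; pose Dw := (size W + size V + size U + size Th)%N.
have [AD qD] : (size A <= D /\ size q <= D)%N by rewrite /D; split; lia.
have [WD VD UD ThD] : [/\ size W <= Dw, size V <= Dw, size U <= Dw & size Th <= Dw]%N.
  by rewrite /Dw; split; lia.
apply: (@ls_eq_rep _ (Dw + (D + D))) => N.
exists (poly_rev (Dw + (D + D)) Th); split; last first.
  by apply: ls_rep_poly; apply: leq_trans ThD (leq_addr _ _).
set F := ls_trunc 0 N (fseries mu); set rA := poly_rev D A; set rq := poly_rev D q.
have e_rep : ls_rep D N (eps mu p j) (F * rA - rq) by exact: ls_rep_eps.
have V2D := leq_trans (size_mulnatl_leq 2 V) VD.
apply: ls_rep_take (ls_rep_add
  (ls_rep_mul (ls_rep_poly N WD) (ls_rep_sub (ls_rep_mul e_rep (ls_rep_poly_deriv N AD))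
                                             (ls_rep_mul (ls_rep_deriv e_rep) (ls_rep_poly N AD))))
  (ls_rep_mul (ls_rep_poly N V2D) (ls_rep_mul e_rep (ls_rep_poly N AD)))) _.
rewrite poly_rev_Theta // -/rA poly_rev_double rev_derivB (rev_derivM 0 D).
(* The semi-classical equation enters through the term [W f' A^2] of [W eps' A]. *)
apply: (take_poly_eq_mod (k := - (rA * rA)) (semiclassical_rep N WD VD UD)).
rewrite -/F; ring.
Qed.

Lemma Omega_polyE n :
  let A := p n in let B := p n.-1 in
  let q := assoc_poly mu p n in let r := assoc_poly mu p n.-1 in
  Omega mu p W V n =
  (acoef p n)%:P * (W * (q^`() * B - r * A^`()) - U * (A * B) - V * (r * A + q * B)).
Proof.
move=> A B q r; set a := acoef p n; set Om := (X in _ = X); apply: polypart_eq.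
pose D := (size A + size q + size B + size r)%N.
pose Dw := (size W + size V + size U + size Om)%N.
have [AD qD BD rD] : [/\ size A <= D, size q <= D, size B <= D & size r <= D]%N.
  by rewrite /D; split; lia.
have [WD VD UD OmD] : [/\ size W <= Dw, size V <= Dw, size U <= Dw & size Om <= Dw]%N.
  by rewrite /Dw; split; lia.
apply: (@ls_eq_rep _ (Dw + (D + D))) => N.
exists (poly_rev (Dw + (D + D)) Om); split; last first.
  by apply: ls_rep_poly; apply: leq_trans OmD (leq_addr _ _).
set F := ls_trunc 0 N (fseries mu); set rA := poly_rev D A; set rB := poly_rev D B.
set rq := poly_rev D q; set rr := poly_rev D r.
have e_rep : ls_rep D N (eps mu p n) (F * rA - rq) by exact: ls_rep_eps.
have e1_rep : ls_rep D N (eps mu p n.-1) (F * rB - rr) by exact: ls_rep_eps.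
have [aWD aVD] : (size (a *: W) <= Dw /\ size (a *: V) <= Dw)%N.
  by split; apply: leq_trans (size_scale_leq _ _) _.
apply: ls_rep_take (ls_rep_add
  (ls_rep_mul (ls_rep_poly N aWD) (ls_rep_sub (ls_rep_mul e1_rep (ls_rep_poly_deriv N AD))
                                              (ls_rep_mul (ls_rep_deriv e_rep) (ls_rep_poly N BD))))
  (ls_rep_mul (ls_rep_poly N aVD) (ls_rep_add (ls_rep_mul e1_rep (ls_rep_poly N AD))
                                              (ls_rep_mul e_rep (ls_rep_poly N BD))))) _.
rewrite poly_rev_Omega // -/rA -/rB !linearZ /= rev_derivB (rev_derivM 0 D) -!mul_polyC.
apply: (take_poly_eq_mod (k := - (a%:P * rA * rB)) (semiclassical_rep N WD VD UD)).
rewrite -/F; ring.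
Qed.

End ThetaOmega.

Section StructureRelations.
Variables (C : fieldType) (W V U A B q r : {poly C}) (a : C).
Hypothesis casorati : a%:P * (q * B - r * A) = 1.

Let Th := W * (q^`() * A - q * A^`()) - U * A ^+ 2 - 2%:R * V * q * A.
Let Th1 := W * (r^`() * B - r * B^`()) - U * B ^+ 2 - 2%:R * V * r * B.
Let Om := a%:P * (W * (q^`() * B - r * A^`()) - U * (A * B) - V * (r * A + q * B)).

Lemma casorati_deriv : a%:P * (q^`() * B + q * B^`() - r^`() * A - r * A^`()) = 0.
Proof.
have := congr1 deriv casorati; rewrite deriv_mulC !derivB !derivM -polyC1 derivC.
by move=> <-; congr (_ * _); ring.
Qed.

Lemma structure_relation_A : W * A^`() = (Om - V) * A - a%:P * Th * B.
Proof.
have -> : (Om - V) * A - a%:P * Th * B =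
    W * A^`() + (a%:P * (q * B - r * A) - 1) * (W * A^`() + V * A) by rewrite /Om /Th; ring.
by rewrite casorati subrr mul0r addr0.
Qed.

Lemma structure_relation_B : W * B^`() = a%:P * Th1 * A - (Om + V) * B.
Proof.
have -> : a%:P * Th1 * A - (Om + V) * B =
    W * B^`() + (a%:P * (q * B - r * A) - 1) * (W * B^`() + V * B)
    - W * B * (a%:P * (q^`() * B + q * B^`() - r^`() * A - r * A^`())).
  by rewrite /Om /Th1; ring.
by rewrite casorati casorati_deriv subrr mul0r addr0 mulr0 subr0.
Qed.

(* Modulo [W], [Theta_n], [Theta_(n-1)], [Omega_n] reduce to [Y1], [Y2], [Y3] below, and
   [Y3^2 - a^2 Y1 Y2 = (a V (q B - r A))^2 = V^2]. *)
Lemma Omega_sq_dvd : exists G, Om ^+ 2 - V ^+ 2 - (a ^+ 2) *: (Th * Th1) = W * G.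
Proof.
pose X1 := q^`() * A - q * A^`(); pose Y1 := - U * A ^+ 2 - 2%:R * V * q * A.
pose X2 := r^`() * B - r * B^`(); pose Y2 := - U * B ^+ 2 - 2%:R * V * r * B.
pose X3 := a%:P * (q^`() * B - r * A^`()).
pose Y3 := - (a%:P * (U * A * B + V * (r * A + q * B))).
exists (X3 * (W * X3 + 2%:R * Y3) - a%:P ^+ 2 * (X1 * (W * X2 + Y2) + Y1 * X2)).
have -> : Om ^+ 2 - V ^+ 2 - (a ^+ 2) *: (Th * Th1) =
    W * (X3 * (W * X3 + 2%:R * Y3) - a%:P ^+ 2 * (X1 * (W * X2 + Y2) + Y1 * X2))
    + V ^+ 2 * ((a%:P * (q * B - r * A)) ^+ 2 - 1).
  by rewrite -mul_polyC polyC_exp /Om /Th /Th1 /X1 /X2 /X3 /Y1 /Y2 /Y3; ring.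
by rewrite casorati expr1n subrr mulr0 addr0.
Qed.

Lemma semiclassical_ode : W != 0 ->
  exists K, W * K = W * ((Om - V)^`() * Th - (Om - V) * Th^`())
                    + Th * (Om ^+ 2 - V ^+ 2 - (a ^+ 2) *: (Th * Th1)) /\
            W * Th * A^`(2) = (W * Th^`() - W^`() * Th - 2%:R * V * Th) * A^`() + K * A.
Proof.
move=> W0; have [G eG] := Omega_sq_dvd.
exists ((Om - V)^`() * Th - (Om - V) * Th^`() + Th * G); split; first by rewrite eG; ring.
have eA' : W^`() * A^`() + W * A^`(2) =
    (Om - V)^`() * A + (Om - V) * A^`() - a%:P * (Th^`() * B + Th * B^`()).
  have := congr1 deriv structure_relation_A.
  by rewrite derivnS derivn1 derivB !derivM derivC mul0r add0r => ->; ring.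
pose L1 := W * A^`() - ((Om - V) * A - a%:P * Th * B).
pose L1' := W^`() * A^`() + W * A^`(2)
  - ((Om - V)^`() * A + (Om - V) * A^`() - a%:P * (Th^`() * B + Th * B^`())).
pose L2 := W * B^`() - (a%:P * Th1 * A - (Om + V) * B).
pose L3 := Om ^+ 2 - V ^+ 2 - (a ^+ 2) *: (Th * Th1) - W * G.
apply: (mulfI W0); apply/eqP; rewrite -subr_eq0; apply/eqP.
transitivity (W * Th * L1' - W * Th^`() * L1 - a%:P * Th ^+ 2 * L2
              + Th * (Om + V) * L1 + Th * A * L3).
  by rewrite /L1 /L1' /L2 /L3 -mul_polyC polyC_exp; ring.
rewrite /L1 /L1' /L2 /L3 -structure_relation_A -eA' -structure_relation_B eG.
by rewrite !subrr !mulr0 !(subr0, addr0).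
Qed.

End StructureRelations.

Local Open Scope complex_scope.

Theorem mainTheorem4 (R : realType) (mu : nat -> R[i]) (p : nat -> {poly R[i]})
    (W V U : {poly R[i]}) :
  (forall n : nat, \det (hankel mu n) != 0) ->
  OP_orthonormal mu p ->
  semiclassical mu W V U ->
  forall n : nat, (1 <= n)%N ->
  let Th := Theta mu p W V n in
  let Th1 := Theta mu p W V n.-1 in
  let Om := Omega mu p W V n in
  let an := acoef p n in
  let y := p n in
  exists K : {poly R[i]},
    W * K = W * ((Om - V)^`() * Th - (Om - V) * Th^`())
            + Th * (Om ^+ 2 - V ^+ 2 - (an ^+ 2) *: (Th * Th1)) /\
    W * Th * y^`(2) = (W * Th^`() - W^`() * Th - 2%:R * V * Th) * y^`() + K * y.
Proof.
(* Orthonormality already forces the Hankel determinants to be nonzero. *)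
move=> _ p_on semi n n1 Th Th1 Om an y.
rewrite /Th /Th1 /Om /an /y (Theta_polyE p semi) (Theta_polyE p semi) (Omega_polyE p semi).
exact: semiclassical_ode (casorati_OP p_on n1) semi.1.
Qed.
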